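(* On the uniform one-dimensional grid of spacing $h$, consider the finite difference operator \[ -F^{1D,e}[u]=A^+\left(\lvert u_x^h\rvert^+,-u_{xx}^h\right)+A^-\left(-\lvert u_x^h\rvert^-,-u_{xx}^h\right). \] Then $-F^{1D,e}$ is elliptic and consistent with $-F^{1D}$, where $F^{1D}[u]=A(u_x,u_{xx})=(u_x^2u_{xx})^{1/3}$.
   Context: $A(p,q)=(p^2q)^{1/3}$ (real cube root), $x^+=\max(x,0)$, $x^-=\min(x,0)$, $A^+(p,q)=A(p^+,q^+)$, $A^-(p,q)=A(p^-,q^-)$. For a grid function $u$: $D^-_xu(x)=\frac{u(x)-u(x-h)}h$, $-D^+_xu(x)=\frac{u(x)-u(x+h)}h$, $\lvert u_x^h\rvert^+=\max\{-D^+_xu,D^-_xu,0\}$, $-\lvert u_x^h\rvert^-=\min\{-D^+_xu,D^-_xu,0\}$, and $u_{xx}^h(x)=\frac{u(x+h)-2u(x)+u(x-h)}{h^2}$. A finite difference operator has the form $F^h[u](x)=F^h(x,u(x),u(x)-u(\cdot))$ (depending on $u(x)$ and the differences $u(x)-u(y)$ for grid points $y$); it is elliptic if $r\le s$ and $v(\cdot)\le w(\cdot)$ imply $F^h(x,r,v(\cdot))\le F^h(x,s,w(\cdot))$. It is consistent with an operator $F$ if for every smooth $\phi$ and every $x$, $\lim_{h\to0,\,y\to x}F^h[\phi](y)=F[\phi](x)$. *)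

From Stdlib Require Import Reals ZArith.
From Coquelicot Require Import Coquelicot.
Open Scope R_scope.

Definition cbrt (x : R) : R :=
  if Rlt_dec 0 x then Rpower x (1/3)
  else if Rlt_dec x 0 then - Rpower (- x) (1/3)
  else 0.

Definition A (p q : R) : R := cbrt (p ^ 2 * q).
Definition Aplus (p q : R) : R := A (Rmax p 0) (Rmax q 0).
Definition Aminus (p q : R) : R := A (Rmin p 0) (Rmin q 0).

(* A finite difference operator on a uniform 1D grid of spacing h:
   Fh h x r v  stands for  F^h(x, r, v(.)),  where r = u(x) and
   v y = u(x) - u(y) for grid points y. *)
Definition fd_operator := R -> R -> R -> (R -> R) -> R.

Definition apply_fd (Fh : fd_operator) (h : R) (u : R -> R) (x : R) : R :=
  Fh h x (u x) (fun y => u x - u y).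

Definition elliptic (Fh : fd_operator) : Prop :=
  forall (h x r s : R) (v w : R -> R), 0 < h -> r <= s ->
    (forall k : Z, v (x + IZR k * h) <= w (x + IZR k * h)) ->
    Fh h x r v <= Fh h x s w.

Definition smooth (f : R -> R) : Prop := forall (n : nat) (x : R), ex_derive_n f n x.

Definition consistent (Fh : fd_operator) (F : (R -> R) -> R -> R) : Prop :=
  forall (phi : R -> R), smooth phi -> forall x : R,
    forall eps : R, 0 < eps -> exists delta : R, 0 < delta /\
      forall h y : R, 0 < h -> h < delta -> Rabs (y - x) < delta ->
        Rabs (apply_fd Fh h phi y - F phi x) < eps.

(* The scheme -F^{1D,e}, written in terms of the differences v y = u(x)-u(y):
   -D^+_x u = v(x+h)/h,  D^-_x u = v(x-h)/h,
   -u_xx^h = (v(x+h) + v(x-h))/h^2,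
   |u_x^h|^+ = max{-D^+u, D^-u, 0},  -|u_x^h|^- = min{-D^+u, D^-u, 0}. *)
Definition minus_F1De : fd_operator :=
  fun h x _ v =>
    let mDp := v (x + h) / h in
    let Dm := v (x - h) / h in
    let muxx := (v (x + h) + v (x - h)) / (h * h) in
    Aplus (Rmax (Rmax mDp Dm) 0) muxx + Aminus (Rmin (Rmin mDp Dm) 0) muxx.

Definition minus_F1D (u : R -> R) (x : R) : R :=
  - A (Derive u x) (Derive_n u 2 x).

(* Writing a = -D^+_x u, b = D^-_x u and c = -u^h_xx, the scheme is
   G(a, b, c) = A^+(max(a, b, 0), c) + A^-(min(a, b, 0), c).  Since p^2 q is
   nondecreasing in p and q on each of the quadrants p, q >= 0 and p, q <= 0,
   and the cube root is increasing, G is nondecreasing in a, b and c; these are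
   nonnegative combinations of the differences u(x) - u(x +- h), which gives
   ellipticity.  G is continuous, and for smooth phi its arguments tend to
   (-phi', phi', -phi'') by the mean value theorem and Taylor's formula, while
   G(-p, p, -q) = A^+(|p|, -q) + A^-(-|p|, -q) = A(p, -q) = -A(p, q). *)

From Stdlib Require Import Reals Lra Psatz.
From Coquelicot Require Import Coquelicot.
Open Scope R_scope.

Lemma Rpower_third_pow3 (x : R) : 0 < x -> Rpower x (1 / 3) ^ 3 = x.
Proof.
  intros Hx. rewrite <- Rpower_pow by apply exp_pos.
  rewrite Rpower_mult. replace (1 / 3 * INR 3) with 1 by (simpl; field).
  apply Rpower_1; assumption.
Qed.

Lemma cbrt_cube (x : R) : cbrt x ^ 3 = x.
Proof.
  unfold cbrt. destruct (Rlt_dec 0 x) as [Hx|]; [now apply Rpower_third_pow3|].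
  destruct (Rlt_dec x 0) as [Hx|]; [|simpl; lra].
  replace ((- Rpower (- x) (1 / 3)) ^ 3) with (- Rpower (- x) (1 / 3) ^ 3) by ring.
  rewrite Rpower_third_pow3; lra.
Qed.

Lemma pow3_le_reg (s t : R) : s ^ 3 <= t ^ 3 -> s <= t.
Proof.
  intros H. apply Rnot_lt_le. intros Hts.
  assert (Hq : 0 < s * s + s * t + t * t).
  { assert (0 < (s - t) * (s - t)) by (apply Rmult_lt_0_compat; lra). nra. }
  assert (0 < (s - t) * (s * s + s * t + t * t)) by (apply Rmult_lt_0_compat; lra).
  nra.
Qed.

Lemma cbrt_le (a b : R) : a <= b -> cbrt a <= cbrt b.
Proof. intros H. apply pow3_le_reg. now rewrite !cbrt_cube. Qed.

Lemma cbrt_pow3 (s : R) : cbrt (s ^ 3) = s.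
Proof. apply Rle_antisym; apply pow3_le_reg; rewrite cbrt_cube; lra. Qed.

Lemma cbrt_opp (x : R) : cbrt (- x) = - cbrt x.
Proof.
  rewrite <- (cbrt_cube x) at 1.
  replace (- cbrt x ^ 3) with ((- cbrt x) ^ 3) by ring. apply cbrt_pow3.
Qed.

Lemma cbrt_0 : cbrt 0 = 0.
Proof. unfold cbrt. repeat destruct Rlt_dec; lra. Qed.

(* [a - b = (s - t) (s^2 + s t + t^2)] with [4 (s^2 + s t + t^2) >= (s - t)^2]. *)
Lemma cbrt_dist (a b : R) : Rabs (cbrt a - cbrt b) ^ 3 <= 4 * Rabs (a - b).
Proof.
  rewrite <- (cbrt_cube a) at 2. rewrite <- (cbrt_cube b) at 2.
  set (s := cbrt a). set (t := cbrt b).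
  replace (s ^ 3 - t ^ 3) with ((s - t) * (s * s + s * t + t * t)) by ring.
  assert (Hsq : (s - t) ^ 2 <= 4 * (s * s + s * t + t * t))
    by (pose proof (pow2_ge_0 (s + t)); nra).
  rewrite Rabs_mult, (Rabs_pos_eq (s * s + s * t + t * t)) by nra.
  rewrite <- pow2_abs in Hsq. pose proof (Rabs_pos (s - t)). nra.
Qed.

Lemma continuous_cbrt (x : R) : continuous cbrt x.
Proof.
  intros P [eps HP].
  assert (Hd : 0 < eps ^ 3 / 4)
    by (pose proof (cond_pos eps); apply Rdiv_lt_0_compat; [apply pow_lt|]; lra).
  exists (mkposreal _ Hd). intros y Hy. apply HP.
  change (Rabs (cbrt y - cbrt x) < eps). change (Rabs (y - x) < eps ^ 3 / 4) in Hy.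
  apply Rnot_le_lt. intros Heps.
  pose proof (pow_incr eps _ 3 (conj (Rlt_le _ _ (cond_pos eps)) Heps)).
  pose proof (cbrt_dist y x). lra.
Qed.

Lemma continuous_Rmax (z : R * R) : continuous (fun z : R * R => Rmax (fst z) (snd z)) z.
Proof.
  apply continuous_ext
    with (f := fun z : R * R => (fst z + snd z + Rabs (fst z - snd z)) * / 2).
  { intros [x y]; simpl. unfold Rmax. destruct Rle_dec;
      [rewrite Rabs_left1|rewrite Rabs_right]; lra. }
  apply (continuous_mult (fun z : R * R => _) (fun _ => / 2)); [|apply continuous_const].
  apply (continuous_plus (fun z : R * R => _) (fun z : R * R => Rabs _)).
  - apply (continuous_plus (fun z : R * R => fst z) (fun z : R * R => snd z));
      [apply continuous_fst|apply continuous_snd].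
  - apply (continuous_comp (fun z : R * R => _) Rabs); [|apply continuous_Rabs].
    apply (continuous_minus (fun z : R * R => fst z) (fun z : R * R => snd z));
      [apply continuous_fst|apply continuous_snd].
Qed.

Lemma continuous_Rmin (z : R * R) : continuous (fun z : R * R => Rmin (fst z) (snd z)) z.
Proof.
  apply continuous_ext with (f := fun z : R * R => - Rmax (- fst z) (- snd z)).
  { intros [x y]; simpl. rewrite Ropp_Rmax, !Ropp_involutive. reflexivity. }
  apply (continuous_opp (fun z : R * R => Rmax _ _)).
  apply (continuous_comp_2 (fun z : R * R => - fst z) (fun z : R * R => - snd z) Rmax).
  - apply (continuous_opp (fun z : R * R => fst z)), continuous_fst.
  - apply (continuous_opp (fun z : R * R => snd z)), continuous_snd.
  - apply continuous_Rmax.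
Qed.

Lemma continuous_A (z : R * R) : continuous (fun z : R * R => A (fst z) (snd z)) z.
Proof.
  apply (continuous_comp (fun z : R * R => fst z ^ 2 * snd z) cbrt); [|apply continuous_cbrt].
  apply continuous_ext with (f := fun z : R * R => fst z * fst z * snd z).
  { intros; simpl; ring. }
  apply (continuous_mult (fun z : R * R => _) (fun z : R * R => snd z)); [|apply continuous_snd].
  apply (continuous_mult (fun z : R * R => fst z) (fun z : R * R => fst z)); apply continuous_fst.
Qed.

Lemma continuous_Aplus (z : R * R) : continuous (fun z : R * R => Aplus (fst z) (snd z)) z.
Proof.
  unfold Aplus.
  apply (continuous_comp_2 (fun z : R * R => Rmax (fst z) 0)
    (fun z : R * R => Rmax (snd z) 0) A);
    [| |apply continuous_A].
  - apply (continuous_comp_2 (fun z : R * R => fst z) (fun _ => 0) Rmax);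
      [apply continuous_fst|apply continuous_const|apply continuous_Rmax].
  - apply (continuous_comp_2 (fun z : R * R => snd z) (fun _ => 0) Rmax);
      [apply continuous_snd|apply continuous_const|apply continuous_Rmax].
Qed.

Lemma continuous_Aminus (z : R * R) : continuous (fun z : R * R => Aminus (fst z) (snd z)) z.
Proof.
  unfold Aminus.
  apply (continuous_comp_2 (fun z : R * R => Rmin (fst z) 0)
    (fun z : R * R => Rmin (snd z) 0) A);
    [| |apply continuous_A].
  - apply (continuous_comp_2 (fun z : R * R => fst z) (fun _ => 0) Rmin);
      [apply continuous_fst|apply continuous_const|apply continuous_Rmin].
  - apply (continuous_comp_2 (fun z : R * R => snd z) (fun _ => 0) Rmin);
      [apply continuous_snd|apply continuous_const|apply continuous_Rmin].
Qed.

Lemma A_opp_r (p q : R) : A p (- q) = - A p q.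
Proof. unfold A. rewrite <- cbrt_opp. f_equal. ring. Qed.

Lemma Aplus_le (p1 p2 q1 q2 : R) : p1 <= p2 -> q1 <= q2 -> Aplus p1 q1 <= Aplus p2 q2.
Proof.
  intros Hp Hq. unfold Aplus, A. apply cbrt_le.
  assert (0 <= Rmax p1 0 <= Rmax p2 0) by (unfold Rmax; repeat destruct Rle_dec; lra).
  assert (0 <= Rmax q1 0 <= Rmax q2 0) by (unfold Rmax; repeat destruct Rle_dec; lra).
  apply Rmult_le_compat; try lra; [apply pow2_ge_0|apply pow_incr; lra].
Qed.

Lemma Aminus_le (p1 p2 q1 q2 : R) : p1 <= p2 -> q1 <= q2 -> Aminus p1 q1 <= Aminus p2 q2.
Proof.
  intros Hp Hq. unfold Aminus, A. apply cbrt_le.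
  assert (Rmin p1 0 <= Rmin p2 0 <= 0) by (unfold Rmin; repeat destruct Rle_dec; lra).
  assert (Rmin q1 0 <= Rmin q2 0 <= 0) by (unfold Rmin; repeat destruct Rle_dec; lra).
  assert (Rmin p2 0 ^ 2 <= Rmin p1 0 ^ 2) by (rewrite <- (pow2_abs (Rmin p1 0)),
    <- (pow2_abs (Rmin p2 0)), !Rabs_left1 by lra; apply pow_incr; lra).
  apply Rle_trans with (Rmin p2 0 ^ 2 * Rmin q1 0).
  - nra.
  - apply Rmult_le_compat_l; [apply pow2_ge_0|lra].
Qed.

(* Only one of the two terms survives, according to the sign of [q]. *)
Lemma Aplus_Rabs_add_Aminus (p q : R) : Aplus (Rabs p) q + Aminus (- Rabs p) q = A p q.
Proof.
  unfold Aplus, Aminus, A.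
  rewrite Rmax_left, Rmin_left by (pose proof (Rabs_pos p); lra).
  replace ((- Rabs p) ^ 2) with (p ^ 2) by (rewrite <- pow2_abs; ring).
  rewrite pow2_abs.
  destruct (Rle_dec 0 q).
  - rewrite Rmax_left, Rmin_right, Rmult_0_r, cbrt_0 by lra. ring.
  - rewrite Rmax_right, Rmin_left, Rmult_0_r, cbrt_0 by lra. ring.
Qed.

(* The arguments [a], [b], [c] stand for [-D^+_x u], [D^-_x u] and [-u_xx^h]. *)
Definition minus_F1De_fun (a b c : R) : R :=
  Aplus (Rmax (Rmax a b) 0) c + Aminus (Rmin (Rmin a b) 0) c.

Lemma minus_F1De_fun_le (a1 a2 b1 b2 c1 c2 : R) :
  a1 <= a2 -> b1 <= b2 -> c1 <= c2 -> minus_F1De_fun a1 b1 c1 <= minus_F1De_fun a2 b2 c2.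
Proof.
  intros Ha Hb Hc. unfold minus_F1De_fun. apply Rplus_le_compat.
  - apply Aplus_le; [unfold Rmax; repeat destruct Rle_dec; lra|assumption].
  - apply Aminus_le; [unfold Rmin; repeat destruct Rle_dec; lra|assumption].
Qed.

Lemma minus_F1De_fun_diag (p q : R) : minus_F1De_fun (- p) p (- q) = - A p q.
Proof.
  unfold minus_F1De_fun.
  replace (Rmax (Rmax (- p) p) 0) with (Rabs p)
    by (unfold Rmax, Rabs; repeat destruct Rle_dec; repeat destruct Rcase_abs; lra).
  replace (Rmin (Rmin (- p) p) 0) with (- Rabs p)
    by (unfold Rmin, Rabs; repeat destruct Rle_dec; repeat destruct Rcase_abs; lra).
  rewrite Aplus_Rabs_add_Aminus. apply A_opp_r.
Qed.

Lemma continuous_minus_F1De_fun (z : R * R * R) :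
  continuous (fun z : R * R * R => minus_F1De_fun (fst (fst z)) (snd (fst z)) (snd z)) z.
Proof.
  unfold minus_F1De_fun.
  apply (continuous_plus (fun z : R * R * R => Aplus _ _) (fun z : R * R * R => Aminus _ _)).
  - apply (continuous_comp_2 (fun z : R * R * R => Rmax (Rmax _ _) 0)
      (fun z : R * R * R => snd z) Aplus);
      [|apply continuous_snd|apply continuous_Aplus].
    apply (continuous_comp_2 (fun z : R * R * R => Rmax _ _) (fun _ => 0) Rmax);
      [|apply continuous_const|apply continuous_Rmax].
    apply (continuous_comp (fun z : R * R * R => fst z) (fun z : R * R => Rmax (fst z) (snd z)));
      [apply continuous_fst|apply continuous_Rmax].
  - apply (continuous_comp_2 (fun z : R * R * R => Rmin (Rmin _ _) 0)
      (fun z : R * R * R => snd z) Aminus);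
      [|apply continuous_snd|apply continuous_Aminus].
    apply (continuous_comp_2 (fun z : R * R * R => Rmin _ _) (fun _ => 0) Rmin);
      [|apply continuous_const|apply continuous_Rmin].
    apply (continuous_comp (fun z : R * R * R => fst z) (fun z : R * R => Rmin (fst z) (snd z)));
      [apply continuous_fst|apply continuous_Rmin].
Qed.

Lemma continuous_ball_lt {T : UniformSpace} (f : T -> R) (x : T) (eps : R) :
  continuous f x -> 0 < eps -> exists d : posreal, forall y, ball x d y -> Rabs (f y - f x) < eps.
Proof. intros Hf Heps. exact (Hf _ (locally_ball (f x) (mkposreal eps Heps))). Qed.

Lemma smooth_continuous_Derive_n (f : R -> R) (n : nat) (x : R) :
  smooth f -> continuous (Derive_n f n) x.
Proof. intros Hf. apply (ex_derive_continuous (Derive_n f n)), (Hf (S n)). Qed.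

Lemma smooth_mean_value (f : R -> R) (a b : R) : smooth f -> a < b ->
  exists z, a < z < b /\ (f b - f a) / (b - a) = Derive f z.
Proof.
  intros Hf Hab.
  destruct (Taylor_Lagrange f 0 a b Hab (fun t _ k _ => Hf k t)) as [z [Hz E]].
  exists z. split; [assumption|]. rewrite E. simpl. change (fun x : R => f x) with f. field. lra.
Qed.

Lemma smooth_taylor2 (f : R -> R) (a b : R) : smooth f -> a < b ->
  exists z, a < z < b /\ f b = f a + (b - a) * Derive f a + (b - a) ^ 2 / 2 * Derive_n f 2 z.
Proof.
  intros Hf Hab.
  destruct (Taylor_Lagrange f 1 a b Hab (fun t _ k _ => Hf k t)) as [z [Hz E]].
  exists z. split; [assumption|]. rewrite E. simpl. change (fun x : R => f x) with f. field.
Qed.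

(* Both points are expanded around [y - h]: Taylor_Lagrange only expands to the right. *)
Lemma second_difference_mean_values (f : R -> R) (y h : R) : smooth f -> 0 < h ->
  exists z1 z2, y - h < z1 < y /\ y - h < z2 < y + h /\
    (f y - f (y + h) + (f y - f (y - h))) / (h * h) = Derive_n f 2 z1 - 2 * Derive_n f 2 z2.
Proof.
  intros Hf Hh.
  destruct (smooth_taylor2 f (y - h) y Hf ltac:(lra)) as [z1 [Hz1 E1]].
  destruct (smooth_taylor2 f (y - h) (y + h) Hf ltac:(lra)) as [z2 [Hz2 E2]].
  exists z1, z2. split; [assumption|split; [assumption|]].
  rewrite E1, E2. field. lra.
Qed.

Lemma difference_quotients_near (f : R -> R) (x d : R) : smooth f -> 0 < d ->
  exists delta, 0 < delta /\ forall h y, 0 < h -> h < delta -> Rabs (y - x) < delta ->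
    Rabs ((f y - f (y + h)) / h - - Derive f x) < d /\
    Rabs ((f y - f (y - h)) / h - Derive f x) < d /\
    Rabs ((f y - f (y + h) + (f y - f (y - h))) / (h * h) - - Derive_n f 2 x) < d.
Proof.
  intros Hf Hd.
  destruct (continuous_ball_lt (Derive_n f 1) x d
    (smooth_continuous_Derive_n f 1 x Hf) Hd) as [d1 C1].
  destruct (continuous_ball_lt (Derive_n f 2) x (d / 3)
    (smooth_continuous_Derive_n f 2 x Hf) ltac:(lra)) as [d2 C2].
  assert (0 < Rmin d1 d2) by (apply Rmin_glb_lt; apply cond_pos).
  pose proof (Rmin_l d1 d2). pose proof (Rmin_r d1 d2).
  exists (Rmin d1 d2 / 2). split; [lra|].
  intros h y Hh Hhd Hy.
  assert (Hnear : forall z, y - h < z < y + h -> Rabs (z - x) < d1 /\ Rabs (z - x) < d2).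
  { intros z Hz. apply Rabs_def2 in Hy. split; apply Rabs_def1; lra. }
  destruct (smooth_mean_value f y (y + h) Hf ltac:(lra)) as [z1 [Hz1 E1]].
  destruct (smooth_mean_value f (y - h) y Hf ltac:(lra)) as [z2 [Hz2 E2]].
  destruct (second_difference_mean_values f y h Hf Hh) as [z3 [z4 [Hz3 [Hz4 E3]]]].
  assert (K1 : Rabs (Derive f z1 - Derive f x) < d) by (apply C1, Hnear; lra).
  assert (K2 : Rabs (Derive f z2 - Derive f x) < d) by (apply C1, Hnear; lra).
  assert (K3 : Rabs (Derive_n f 2 z3 - Derive_n f 2 x) < d / 3) by (apply C2, Hnear; lra).
  assert (K4 : Rabs (Derive_n f 2 z4 - Derive_n f 2 x) < d / 3) by (apply C2, Hnear; lra).
  replace ((f y - f (y + h)) / h) with (- Derive f z1) by (rewrite <- E1; field; lra).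
  replace ((f y - f (y - h)) / h) with (Derive f z2) by (rewrite <- E2; field; lra).
  rewrite E3.
  apply Rabs_def2 in K1, K2, K3, K4.
  repeat split; apply Rabs_def1; lra.
Qed.

Lemma minus_F1De_eq (h x r : R) (v : R -> R) :
  minus_F1De h x r v =
  minus_F1De_fun (v (x + h) / h) (v (x - h) / h) ((v (x + h) + v (x - h)) / (h * h)).
Proof. reflexivity. Qed.

Lemma minus_F1De_elliptic : elliptic minus_F1De.
Proof.
  intros h x r s v w Hh _ Hvw.
  pose proof (Hvw 1%Z) as Hright. pose proof (Hvw (-1)%Z) as Hleft.
  replace (x + IZR 1 * h) with (x + h) in Hright by ring.
  replace (x + IZR (-1) * h) with (x - h) in Hleft by ring.
  assert (0 < / h) by (apply Rinv_0_lt_compat; lra).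
  assert (0 < / (h * h)) by (apply Rinv_0_lt_compat; nra).
  rewrite !minus_F1De_eq.
  apply minus_F1De_fun_le; unfold Rdiv; apply Rmult_le_compat_r; lra.
Qed.

Lemma minus_F1De_consistent : consistent minus_F1De minus_F1D.
Proof.
  intros phi Hphi x eps Heps.
  set (p := Derive phi x). set (q := Derive_n phi 2 x).
  destruct (continuous_ball_lt _ ((- p, p), - q) eps
    (continuous_minus_F1De_fun _) Heps) as [d Hd].
  destruct (difference_quotients_near phi x d Hphi (cond_pos d)) as [delta [Hdelta Hquot]].
  exists delta. split; [assumption|].
  intros h y Hh Hhd Hy.
  destruct (Hquot h y Hh Hhd Hy) as [Ha [Hb Hc]].
  unfold minus_F1D. fold p q. rewrite <- minus_F1De_fun_diag.
  exact (Hd ((_, _), _) (conj (conj Ha Hb) Hc)).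
Qed.

Theorem mainTheorem5 :
  elliptic minus_F1De /\ consistent minus_F1De minus_F1D.
Proof. split; [exact minus_F1De_elliptic|exact minus_F1De_consistent]. Qed.
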